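(* Let $p$ be an odd prime and let $G$ be a quasi-powerful $p$-group. Then $G^{p}=\{g^{p}\mid g\in G\}$.
   Context: For an odd prime $p$, a finite $p$-group $G$ is powerful if $[G,G]\le G^{p}$, where $G^{p}=\langle g^{p}\mid g\in G\rangle$, and $G$ is quasi-powerful if $G/Z(G)$ is powerful. *)

From mathcomp Require Import all_boot all_fingroup all_solvable.
Set Implicit Arguments. Unset Strict Implicit. Unset Printing Implicit Defensive.
Local Open Scope group_scope.

Definition pth_powers (gT : finGroupType) (p : nat) (G : {set gT}) : {set gT} :=
  [set x ^+ p | x in G].

Definition power_subgroup (gT : finGroupType) (p : nat) (G : {set gT}) : {set gT} :=
  << pth_powers p G >>.

Definition powerful (gT : finGroupType) (p : nat) (G : {set gT}) : bool :=
  [~: G, G] \subset power_subgroup p G.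

Definition quasi_powerful (gT : finGroupType) (p : nat) (G : {group gT}) : bool :=
  powerful p (G / 'Z(G)).

From mathcomp Require Import all_boot all_fingroup all_solvable.
Set Implicit Arguments. Unset Strict Implicit. Unset Printing Implicit Defensive.
Local Open Scope group_scope.

(* Let L = Z(G) Mho^1(G) and V = Mho^1(L); quasi-powerfulness says G' <= L.
   Modulo R = [Mho^1(G), G, G] V the group G has class at most 3 and a derived
   subgroup of exponent p, so for odd p its p-th powers are central; hence
   [Mho^1(G), G] <= R, and nilpotency gives [L, G] = [Mho^1(G), G] <= V.  Then
   G / V has class at most 2 with derived subgroup of exponent p, so
   a^p b^p = v (ab)^p with v in V.  Now H = <ab> L is quasi-powerful, with
   V <= Mho^1(H).  If H = G, then G = <ab> Z(G) Phi(G) = <ab> Z(G) is abelian;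
   otherwise, by induction on |G|, Mho^1(H) consists of p-th powers, and so
   does v (ab)^p.  Thus the p-th powers of G form a subgroup. *)

Section ClassTwoPowers.

Variables (gT : finGroupType) (n : nat).
Hypothesis odd_n : odd n.
Implicit Types x y : gT.

(* (x y)^n = x^n y^n [y, x]^(n choose 2), and n divides (n choose 2) as n is odd. *)
Lemma expgMn_class2 x y :
    commute x [~ y, x] -> commute y [~ y, x] -> [~ y, x] ^+ n = 1 ->
  (x * y) ^+ n = x ^+ n * y ^+ n.
Proof.
by move=> cxc cyc cn1; rewrite expMg_Rmul // bin2odd // expgM cn1 expg1n mulg1.
Qed.

Lemma commXg_class2 x y :
    commute x [~ [~ x, y], x] -> commute [~ x, y] [~ [~ x, y], x] ->
    [~ x, y] ^+ n = 1 ->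
  [~ x ^+ n, y] = 1.
Proof.
set u := [~ x, y]; set c := [~ u, x] => cxc cuc un1.
have cn1 : c ^+ n = 1.
  have : (u ^ x) ^+ n = 1 by rewrite -conjXg un1 conj1g.
  by rewrite conjg_mulR expgMn // un1 mul1g.
by rewrite commgEl conjXg conjg_mulR expgMn_class2 // un1 mulg1 mulVg.
Qed.

End ClassTwoPowers.

Lemma expg_Mho1 (gT : finGroupType) (p : nat) (H : {group gT}) x :
  p.-group H -> x \in H -> x ^+ p \in 'Mho^1(H).
Proof.
by move=> pH Hx; have := Mho_p_elt 1 Hx (mem_p_elt pH Hx); rewrite expn1.
Qed.

Section SmallClass.

Variables (gT : finGroupType) (p : nat) (H : {group gT}).
Hypotheses (odd_p : odd p) (pH : p.-group H) (Mho_H'_1 : 'Mho^1(H^`(1)) = 1).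

Lemma expgp_der1 u : u \in H^`(1) -> u ^+ p = 1.
Proof.
move=> H'u; have := expg_Mho1 (pgroupS (der_sub 1 H) pH) H'u.
by rewrite Mho_H'_1 => /set1P.
Qed.

Lemma Mho1_sub_center : [~: H^`(1), H] \subset 'Z(H) -> 'Mho^1(H) \subset 'Z(H).
Proof.
move=> cH'H; rewrite (MhoE 1 pH) expn1 gen_subG.
apply/subsetP=> _ /imsetP[x Hx ->]; apply/centerP; split=> [|y Hy]; first exact: groupX.
have H'xy : [~ x, y] \in H^`(1) := mem_commg Hx Hy.
have Zc : [~ [~ x, y], x] \in 'Z(H) by rewrite (subsetP cH'H) ?mem_commg.
apply/commgP/eqP; apply: commXg_class2; rewrite ?expgp_der1 //.
  exact: centerC Hx _ Zc.
exact: centerC (subsetP (der_sub 1 H) _ H'xy) _ Zc.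
Qed.

Lemma expgMn_class2_group :
  H^`(1) \subset 'Z(H) -> {in H &, forall x y, (x * y) ^+ p = x ^+ p * y ^+ p}.
Proof.
move=> sH'Z x y Hx Hy; have Zc : [~ y, x] \in 'Z(H) by rewrite (subsetP sH'Z) ?mem_commg.
apply: (expgMn_class2 odd_p); [exact: centerC Hx _ Zc | exact: centerC Hy _ Zc |].
by rewrite expgp_der1 ?mem_commg.
Qed.

End SmallClass.

Lemma nil_sub_commY (gT : finGroupType) (G M V : {group gT}) :
    nilpotent G -> M \subset G -> G \subset 'N(V) -> M \subset [~: M, G] <*> V ->
  M \subset V.
Proof.
move=> nilG sMG nVG sM_MGV; have nVM := subset_trans sMG nVG.
rewrite -quotient_sub1 // subG1.
apply: (implyP (forallP (quotient_nil V nilG) (M / V)%G)).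
rewrite subsetI quotientS //= -quotientR //.
have sMG_G : [~: M, G] \subset G := subset_trans (commSg G sMG) (der_sub 1 G).
by rewrite -(quotientYidr (subset_trans sMG_G nVG)) quotientS.
Qed.

Lemma quotient_sub_center (gT : finGroupType) (A : {set gT}) (G R : {group gT}) :
  A \subset G -> [~: A, G] \subset R -> A / R \subset 'Z(G / R).
Proof.
by move=> sAG sAGR; apply/subsetIP; split; [exact: quotientS | exact: quotient_cents2r].
Qed.

Lemma quotient_Mho (gT : finGroupType) n (G H : {group gT}) :
  G \subset 'N(H) -> 'Mho^n(G) / H = 'Mho^n(G / H).
Proof. exact: morphim_Mho. Qed.

Lemma power_subgroupE (gT : finGroupType) (p : nat) (G : {group gT}) :
  p.-group G -> power_subgroup p G = 'Mho^1(G).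
Proof. by move=> pG; rewrite (MhoE 1 pG) expn1. Qed.

Lemma quasi_powerfulE (gT : finGroupType) (p : nat) (G : {group gT}) :
  p.-group G -> quasi_powerful p G = ([~: G, G] \subset 'Z(G) * 'Mho^1(G)).
Proof.
move=> pG; have nZG := normal_norm (center_normal G).
rewrite /quasi_powerful /powerful power_subgroupE ?quotient_pgroup //.
by rewrite -quotient_Mho // -quotientR // quotientSK // (subset_trans (der_sub 1 G)).
Qed.

Section QuasiPowerful.

Variables (gT : finGroupType) (p : nat) (G : {group gT}).
Hypotheses (odd_p : odd p) (pG : p.-group G).

Let L := ('Z(G) <*> 'Mho^1(G))%G.
Let V := 'Mho^1(L)%G.

Let nLG : L <| G. Proof. exact: normalY (center_normal G) (Mho_normal 1 G). Qed.
Let sLG : L \subset G. Proof. exact: normal_sub nLG. Qed.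
Let nVG : G \subset 'N(V).
Proof. exact: normal_norm (char_normal_trans (Mho_char 1 L) nLG). Qed.

Let LE : L :=: 'Z(G) * 'Mho^1(G).
Proof. exact/cent_joinEl/(subset_trans (subsetIr _ _))/centS/Mho_sub. Qed.

Lemma commg_ZMho_sub_Mho : [~: L, G] \subset [~: 'Mho^1(G), G].
Proof.
rewrite LE commMG; last by rewrite normsRr ?Mho_sub ?gFnorm.
by rewrite (commG1P (subsetIr G _)) mul1g.
Qed.

Hypothesis qpG : quasi_powerful p G.

Let sG'L : G^`(1) \subset L.
Proof. by rewrite LE -(quasi_powerfulE pG). Qed.

Let Mho1_der1_quotient (R : {group gT}) :
  G \subset 'N(R) -> V \subset R -> 'Mho^1((G / R)^`(1)) = 1.
Proof.
move=> nRG sVR; have nRG' := subset_trans (der_sub 1 G) nRG.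
rewrite -(quotient_der 1 nRG) [LHS](esym (quotient_Mho 1 nRG')); apply/trivgP.
by rewrite quotient_sub1 ?(subset_trans (Mho_sub 1 _) nRG') ?(subset_trans (MhoS 1 sG'L)).
Qed.

Lemma commg_Mho_sub : [~: 'Mho^1(G), G] \subset V.
Proof.
set M := [~: 'Mho^1(G), G]; set R := ([~: M, G] <*> V)%G.
have sG'G := der_sub 1 G.
have sMG : M \subset G := subset_trans (commSg G (Mho_sub 1 G)) sG'G.
have nRG : G \subset 'N(R) by rewrite normsY ?normsRr.
apply: (nil_sub_commY (pgroup_nil pG) sMG nVG).
rewrite -quotient_cents2 ?(subset_trans (Mho_sub 1 G)) //.
apply: subset_trans (subsetIr (G / R) _); rewrite quotient_Mho //.
apply: (Mho1_sub_center odd_p); first exact: quotient_pgroup.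
  by rewrite Mho1_der1_quotient ?joing_subr.
apply: subset_trans (quotient_sub_center sMG (joing_subl _ _)).
rewrite -(quotient_der 1 nRG) -quotientR ?(subset_trans sG'G) //.
exact/quotientS/(subset_trans (commSg G sG'L))/commg_ZMho_sub_Mho.
Qed.

Lemma commg_ZMho_sub : [~: L, G] \subset V.
Proof. exact: subset_trans commg_ZMho_sub_Mho commg_Mho_sub. Qed.

Lemma expgMn_mod_Mho a b :
  a \in G -> b \in G -> a ^+ p * b ^+ p \in V :* (a * b) ^+ p.
Proof.
move=> Ga Gb; have NV x : x \in G -> x \in 'N(V) := subsetP nVG x.
have expGV : {in G / V &, forall x y, (x * y) ^+ p = x ^+ p * y ^+ p}.
  apply: (expgMn_class2_group odd_p); rewrite ?quotient_pgroup ?Mho1_der1_quotient //.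
  rewrite -(quotient_der 1 nVG); apply: subset_trans (quotientS V sG'L) _.
  exact: quotient_sub_center sLG commg_ZMho_sub.
apply/rcoset_kercosetP; try by rewrite NV ?(groupM, groupX).
rewrite morphM ?NV ?groupX // !morphX ?NV ?groupM // morphM ?NV //.
by rewrite expGV ?mem_quotient.
Qed.

Lemma quasi_powerful_cycleY c : c \in G -> quasi_powerful p (<[c]> <*> L).
Proof.
move=> Gc; have sCG : <[c]> \subset G by rewrite cycle_subG.
have sHG : <[c]> <*> L \subset G by rewrite join_subG sCG.
have cLG : L / V \subset 'C(G / V) := quotient_cents2r commg_ZMho_sub.
have sH'V : (<[c]> <*> L)^`(1) \subset V.
  apply: der1_min; first exact: subset_trans sHG nVG.
  rewrite quotientY ?(subset_trans _ nVG) // abelianY quotient_abelian ?cycle_abelian //.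
  by rewrite /abelian !(subset_trans cLG) // centS ?quotientS.
rewrite quasi_powerfulE ?(pgroupS sHG) //; apply: subset_trans (mulG_subr _ _).
exact: subset_trans sH'V (MhoS 1 (joing_subr _ _)).
Qed.

Lemma abelian_cycleY c : <[c]> <*> L = G -> abelian G.
Proof.
move=> defG; have sCG : <[c]> \subset G by rewrite -defG; apply: joing_subl.
have defG' : 'Phi(G) <*> (<[c]> <*> 'Z(G)) = G.
  have sMhoPhi : 'Mho^1(G) \subset 'Phi(G) by rewrite (Phi_joing pG) joing_subr.
  apply/eqP; rewrite eqEsubset !join_subG Phi_sub sCG center_sub -{1}defG /=.
  by rewrite joingA join_subG joing_subr (subset_trans sMhoPhi) ?joing_subl.
have := Phi_nongen defG'; rewrite genGid => <-.
by rewrite abelianY cycle_abelian center_abelian (subset_trans (subsetIr _ _)) ?centS.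
Qed.

End QuasiPowerful.

Lemma group_set_pth_powers (gT : finGroupType) (p : nat) (G : {group gT}) :
  odd p -> p.-group G -> quasi_powerful p G -> group_set (pth_powers p G).
Proof.
move=> odd_p; move: {2}_.+1 (ltnSn #|G|) => m; elim: m G => // m IHm G leGm pG qpG.
apply/group_setP; split=> [|_ _ /imsetP[a Ga ->] /imsetP[b Gb ->]].
  by apply/imsetP; exists 1; rewrite ?expg1n.
have Gab : a * b \in G by rewrite groupM.
set H := (<[a * b]> <*> ('Z(G) <*> 'Mho^1(G)))%G.
have sHG : H \subset G by rewrite !join_subG cycle_subG Gab center_sub Mho_sub.
have [defG | neHG] := eqVneq (gval H) (gval G).
  have cGG := abelian_cycleY pG defG.
  by rewrite -expgMn; [apply: imset_f | apply: (centsP cGG)].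
have ltHm : #|H| < m by apply: leq_trans (proper_card _) leGm; rewrite properEneq neHG.
have pH := pgroupS sHG pG.
have sMhoH_G : 'Mho^1(H) \subset pth_powers p G.
  rewrite -(power_subgroupE pH) /power_subgroup gen_set_id ?imsetS //.
  by rewrite IHm ?quasi_powerful_cycleY.
apply: (subsetP sMhoH_G).
have /rcosetP[v Vv ->] := expgMn_mod_Mho odd_p pG qpG Ga Gb.
have Hab : a * b \in H by rewrite mem_gen ?inE ?cycle_id.
by rewrite groupM ?expg_Mho1 ?(subsetP (MhoS 1 (joing_subr _ _)) _ Vv).
Qed.

Theorem theorem4p6 (gT : finGroupType) (p : nat) (G : {group gT}) :
  prime p -> odd p -> p.-group G -> quasi_powerful p G ->
  power_subgroup p G = pth_powers p G.
Proof.
by move=> _ odd_p pG qpG; apply/gen_set_id/group_set_pth_powers.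
Qed.
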